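(* In the triangle $ABC$ with $a=\sqrt{2-\sqrt2}$ and $b=c=1$, the triangle center $X_{26}$ coincides with vertex $A$.
   Context: $X_n$ denotes the $n$-th triangle center listed in Kimberling's Encyclopedia of Triangle Centers (ETC), given by barycentric coordinates in terms of $a=BC$, $b=CA$, $c=AB$. *)

From Stdlib Require Import Reals.
Open Scope R_scope.

(* Cosine of the angle opposite side x in a triangle with sides x, y, z
   (law of cosines). *)
Definition cos_opp (x y z : R) : R := (y^2 + z^2 - x^2) / (2 * y * z).

Definition cos2_opp (x y z : R) : R := 2 * (cos_opp x y z)^2 - 1.

(* First barycentric coordinate of X(26) (circumcenter of the tangential
   triangle), ETC: trilinears a (b^2 cos 2B + c^2 cos 2C - a^2 cos 2A),
   hence barycentrics a^2 (b^2 cos 2B + c^2 cos 2C - a^2 cos 2A). *)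
Definition X26_first (a b c : R) : R :=
  a^2 * (b^2 * cos2_opp b c a + c^2 * cos2_opp c a b - a^2 * cos2_opp a b c).

Definition X26 (a b c : R) : R * R * R :=
  (X26_first a b c, X26_first b c a, X26_first c a b).

Definition bary_same (p q : R * R * R) : Prop :=
  exists k : R, k <> 0 /\
    let '(p1, p2, p3) := p in let '(q1, q2, q3) := q in
    p1 = k * q1 /\ p2 = k * q2 /\ p3 = k * q3.

Definition vertexA : R * R * R := (1, 0, 0).

(* In an isosceles triangle with apex A (b = c), the B- and C-coordinates of
   X(26) both reduce to a^2 b^2 cos 2A, while the A-coordinate reduces to
   2 a^2 b^2 cos 2B when cos 2A = 0.  For a = sqrt(2 - sqrt 2), b = c = 1 the
   law of cosines gives cos A = sqrt 2 / 2, i.e. A = 45 degrees, so cos 2A = 0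
   and cos 2B = - sqrt 2 / 2 <> 0: X(26) is the vertex A. *)

From Stdlib Require Import Reals Lra Psatz.
Open Scope R_scope.

Lemma cos_opp_swap (x y z : R) : cos_opp x y z = cos_opp x z y.
Proof. unfold cos_opp; f_equal; ring. Qed.

Lemma cos2_opp_swap (x y z : R) : cos2_opp x y z = cos2_opp x z y.
Proof. unfold cos2_opp; now rewrite cos_opp_swap. Qed.

Lemma X26_isosceles (a b : R) :
  X26 a b b =
  (a^2 * (2 * b^2 * cos2_opp b b a - a^2 * cos2_opp a b b),
   a^2 * b^2 * cos2_opp a b b,
   a^2 * b^2 * cos2_opp a b b).
Proof.
  unfold X26, X26_first.
  rewrite (cos2_opp_swap b a b).
  f_equal; [f_equal|]; ring.
Qed.

Lemma bary_same_vertexA (p : R) : p <> 0 -> bary_same (p, 0, 0) vertexA.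
Proof. intro Hp; exists p; split; [exact Hp | repeat split; ring]. Qed.

Lemma X26_isosceles_vertexA (a b : R) :
  a <> 0 -> b <> 0 -> cos2_opp a b b = 0 -> cos2_opp b b a <> 0 ->
  bary_same (X26 a b b) vertexA.
Proof.
  intros Ha Hb Hapex Hbase.
  rewrite X26_isosceles, Hapex.
  replace (a^2 * b^2 * 0) with 0 by ring.
  replace (a^2 * (2 * b^2 * cos2_opp b b a - a^2 * 0))
    with (2 * a^2 * b^2 * cos2_opp b b a) by ring.
  apply bary_same_vertexA.
  repeat apply Rmult_integral_contrapositive_currified; try apply pow_nonzero;
    lra.
Qed.

Lemma sqrt2_bounds : 0 < sqrt 2 < 2.
Proof.
  assert (H2 : sqrt 2 * sqrt 2 = 2) by (apply sqrt_sqrt; lra).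
  assert (Hpos : 0 < sqrt 2) by (apply sqrt_lt_R0; lra).
  nra.
Qed.

Lemma sqrt_2_sub_sqrt2_pos : 0 < sqrt (2 - sqrt 2).
Proof. apply sqrt_lt_R0; pose proof sqrt2_bounds; lra. Qed.

Lemma sqrt_2_sub_sqrt2_sqr : sqrt (2 - sqrt 2) ^ 2 = 2 - sqrt 2.
Proof.
  rewrite <- Rsqr_pow2; apply Rsqr_sqrt; pose proof sqrt2_bounds; lra.
Qed.

Lemma cos2_opp_apex_45 : cos2_opp (sqrt (2 - sqrt 2)) 1 1 = 0.
Proof.
  unfold cos2_opp, cos_opp; rewrite sqrt_2_sub_sqrt2_sqr.
  replace ((1 ^ 2 + 1 ^ 2 - (2 - sqrt 2)) / (2 * 1 * 1)) with (sqrt 2 / 2)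
    by field.
  replace ((sqrt 2 / 2) ^ 2) with (sqrt 2 * sqrt 2 / 4) by field.
  rewrite sqrt_sqrt by lra; field.
Qed.

Lemma cos2_opp_base_45 : cos2_opp 1 1 (sqrt (2 - sqrt 2)) = - sqrt 2 / 2.
Proof.
  pose proof sqrt_2_sub_sqrt2_pos as Hpos.
  unfold cos2_opp, cos_opp.
  replace ((1 ^ 2 + sqrt (2 - sqrt 2) ^ 2 - 1 ^ 2) / (2 * 1 * sqrt (2 - sqrt 2)))
    with (sqrt (2 - sqrt 2) / 2) by (field; lra).
  replace ((sqrt (2 - sqrt 2) / 2) ^ 2) with (sqrt (2 - sqrt 2) ^ 2 / 4)
    by field.
  rewrite sqrt_2_sub_sqrt2_sqr; field.
Qed.

Theorem theorem3p7 :
  bary_same (X26 (sqrt (2 - sqrt 2)) 1 1) vertexA.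
Proof.
  pose proof sqrt2_bounds.
  pose proof sqrt_2_sub_sqrt2_pos.
  apply X26_isosceles_vertexA; try lra.
  - exact cos2_opp_apex_45.
  - rewrite cos2_opp_base_45; lra.
Qed.
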